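(* Assume $\mathrm{SRP}(\omega_2)$. Then the nonstationary ideal $\mathrm{NS}_{\omega_1}$ on $\omega_1$ is saturated, i.e. $\mathcal P(\omega_1)/\mathrm{NS}_{\omega_1}$ has the $\omega_2$-chain condition: every family of stationary subsets of $\omega_1$ whose pairwise intersections are nonstationary has cardinality at most $\omega_1$.
   Context: For an uncountable set $Z$, a club on $[Z]^\omega$ is a set of the form $\{Y\in[Z]^\omega: g[Y^{<\omega}]\subseteq Y\}$ for some $g:Z^{<\omega}\to Z$, and a set is stationary iff it meets every club. $S\subseteq[X]^\omega$ is projectively stationary iff $\omega_1\subseteq X$, $S$ is stationary, and $\{A\cap\omega_1:A\in S\}$ contains a club on $[\omega_1]^\omega$. $\mathrm{SRP}(X)$: every projectively stationary $S\subseteq[X]^\omega$ strongly reflects on some $Z$ with $\omega_1\subseteq Z\subseteq X$, $|Z|=\omega_1$, i.e. $S\cap[Z]^\omega$ contains a club on $[Z]^\omega$. *)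

(* Set theory is modelled over a type W carrying a strict
   well-order lt of order type omega_2 (see Omega2Order below).  Subsets of W
   are predicates W -> Prop; sets of subsets are predicates on those, always
   read up to extensional equality. *)
From Stdlib Require Import List.
Import ListNotations.

Section SetTheory.
Variable W : Type.
Variable lt : W -> W -> Prop.

(* omega_1 as a subset of W: the points with countable initial segment. *)
Definition om1 (x : W) : Prop :=
  exists f : nat -> W, forall y, lt y x -> exists n, f n = y.

(* W with lt is a well-order of order type omega_2: strict total well-order,
   every proper initial segment has size <= aleph_1 (injects into om1),
   and W itself does not inject into om1. *)
Definition Omega2Order : Prop :=
  (forall x, ~ lt x x) /\
  (forall x y z, lt x y -> lt y z -> lt x z) /\
  (forall x y, lt x y \/ x = y \/ lt y x) /\
  well_founded lt /\
  (forall x, exists f : W -> W,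
      (forall y, lt y x -> om1 (f y)) /\
      (forall y z, lt y x -> lt z x -> f y = f z -> y = z)) /\
  ~ (exists f : W -> W, (forall y, om1 (f y)) /\
                        (forall y z, f y = f z -> y = z)).

Definition ctbl_inf (Y : W -> Prop) : Prop :=
  exists f : nat -> W,
    (forall n, Y (f n)) /\ (forall n m, f n = f m -> n = m) /\
    (forall x, Y x -> exists n, f n = x).

Definition subset (A B : W -> Prop) : Prop := forall x, A x -> B x.
Definition seteq (A B : W -> Prop) : Prop := forall x, A x <-> B x.

Definition inS (S : (W -> Prop) -> Prop) (Y : W -> Prop) : Prop :=
  exists A, S A /\ seteq A Y.

Definition fun_into (Z : W -> Prop) (g : list W -> W) : Prop :=
  forall l, Forall Z l -> Z (g l).

Definition in_club (Z : W -> Prop) (g : list W -> W) (Y : W -> Prop) : Prop :=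
  ctbl_inf Y /\ subset Y Z /\ (forall l, Forall Y l -> Y (g l)).

Definition stationary_in (X : W -> Prop) (S : (W -> Prop) -> Prop) : Prop :=
  forall g, fun_into X g -> exists Y, in_club X g Y /\ inS S Y.

Definition proj_stationary (S : (W -> Prop) -> Prop) : Prop :=
  stationary_in (fun _ => True) S /\
  exists g, fun_into om1 g /\
    forall B, in_club om1 g B ->
      exists A, S A /\ seteq (fun x => A x /\ om1 x) B.

Definition card_om1 (Z : W -> Prop) : Prop :=
  exists f : W -> W,
    (forall x, Z x -> om1 (f x)) /\
    (forall x y, Z x -> Z y -> f x = f y -> x = y) /\
    (forall z, om1 z -> exists x, Z x /\ f x = z).

Definition SRP : Prop :=
  forall S : (W -> Prop) -> Prop,
    (forall A, S A -> ctbl_inf A) ->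
    proj_stationary S ->
    exists Z : W -> Prop,
      subset om1 Z /\ card_om1 Z /\
      exists g, fun_into Z g /\ forall Y, in_club Z g Y -> inS S Y.

Definition club1 (C : W -> Prop) : Prop :=
  subset C om1 /\
  (forall x, om1 x -> exists y, C y /\ lt x y) /\
  (forall x, om1 x -> (exists y, lt y x) ->
     (forall y, lt y x -> exists z, C z /\ lt y z /\ lt z x) -> C x).

Definition stationary1 (A : W -> Prop) : Prop :=
  forall C, club1 C -> exists x, A x /\ C x.

Definition NS_saturated : Prop :=
  forall F : (W -> Prop) -> Prop,
    (forall A, F A -> subset A om1) ->
    (forall A, F A -> stationary1 A) ->
    (forall A B, F A -> F B -> ~ seteq A B ->
       ~ stationary1 (fun x => A x /\ B x)) ->
    exists f : (W -> Prop) -> W,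
      (forall A, F A -> om1 (f A)) /\
      (forall A B, F A -> F B -> f A = f B -> seteq A B).

End SetTheory.

(* Suppose a family of stationary sets with pairwise nonstationary intersections has
   size omega_2; recursion along the well-order enumerates it as (A_xi : xi < omega_2).
   Let S consist of the countable X with d = X ∩ ω1 such that either d ∈ A_xi for some
   xi ∈ X \ ω1, or d ∉ A_xi for every xi ≥ ω1.  S is projectively stationary: for
   stationarity take hulls of d ∪ {xi} where d ∈ A_xi is a point at which the hull
   meets ω1 exactly in d; for the projection, any countable B ⊆ ω1 becomes a member of
   S after adding at most one witness xi.  SRP yields Z of size ω1 on which S contains
   a club.  Pick eta ∉ Z and, for xi ∈ Z, clubs C_xi disjoint from A_xi ∩ A_eta.  A
   countable X in that club, closed under "next point of C_xi above y" and with
   d = X ∩ ω1 ∈ A_eta, has d ∈ C_xi for every xi ∈ X, so neither alternative of S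
   holds at X. *)

From Stdlib Require Import List Arith Lia Classical ClassicalEpsilon FunctionalExtensionality Cantor.
Import ListNotations.

Definition choose_or {A : Type} (d : A) (P : A -> Prop) : A :=
  match excluded_middle_informative (exists a, P a) with
  | left e => proj1_sig (constructive_indefinite_description P e)
  | right _ => d
  end.

Lemma choose_or_spec {A : Type} (d : A) (P : A -> Prop) :
  (exists a, P a) -> P (choose_or d P).
Proof.
  intro e. unfold choose_or. destruct (excluded_middle_informative _) as [e'|n].
  - exact (proj2_sig (constructive_indefinite_description P e')).
  - contradiction.
Qed.

Lemma choose_or_default {A : Type} (d : A) (P : A -> Prop) :
  ~ (exists a, P a) -> choose_or d P = d.
Proof.
  intro H. unfold choose_or. destruct (excluded_middle_informative _); [contradiction|auto].
Qed.

Lemma wf_least {W : Type} (lt : W -> W -> Prop) (Hwf : well_founded lt)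
  (P : W -> Prop) : (exists x, P x) -> exists x, P x /\ forall y, lt y x -> ~ P y.
Proof.
  intros [x Hx]. apply NNPP; intro Hn.
  assert (Hnone : forall z, ~ P z).
  { intro z. induction z as [z IH] using (well_founded_ind Hwf).
    intro Pz. apply Hn. exists z. split; auto. }
  exact (Hnone x Hx).
Qed.

Section Countable.
Variable W : Type.

Definition countable (P : W -> Prop) : Prop :=
  exists s : nat -> W, forall x, P x -> exists n, s n = x.

Definition infinite (P : W -> Prop) : Prop :=
  forall l : list W, exists x, P x /\ ~ In x l.

Lemma countable_sub (P Q : W -> Prop) :
  countable Q -> (forall x, P x -> Q x) -> countable P.
Proof. intros [s Hs] H. exists s. intros x Px. apply Hs, H, Px. Qed.

Lemma countable_bigunion (P : nat -> W -> Prop) :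
  (forall n, countable (P n)) -> countable (fun x => exists n, P n x).
Proof.
  intro H.
  destruct (choice (fun n (s : nat -> W) => forall x, P n x -> exists k, s k = x) H)
    as [S HS].
  exists (fun k => let (a, b) := of_nat k in S a b).
  intros x [n Hn]. destruct (HS n x Hn) as [k Hk].
  exists (to_nat (n, k)). rewrite cancel_of_to. exact Hk.
Qed.

Lemma countable_union (P Q : W -> Prop) :
  countable P -> countable Q -> countable (fun x => P x \/ Q x).
Proof.
  intros HP HQ.
  apply countable_sub with (fun x => exists n, (match n with 0 => P | _ => Q end) x).
  - apply countable_bigunion. intros [|]; auto.
  - intros x [H|H]; [exists 0|exists 1]; auto.
Qed.

Lemma countable_eq1 (a : W) : countable (fun x => x = a).
Proof. exists (fun _ => a). intros x ->. exists 0. auto. Qed.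

Lemma inj_seq_avoids_list (d : nat -> W) : (forall n m, d n = d m -> n = m) ->
  forall l N, exists n, N <= n /\ ~ In (d n) l.
Proof.
  intros Hd l. induction l as [|a l IH]; intro N.
  - exists N. split; auto.
  - destruct (IH N) as [n [Hn1 Hn2]].
    destruct (classic (d n = a)) as [E|E].
    + destruct (IH (S n)) as [m [Hm1 Hm2]]. exists m. split; [lia|].
      intros [H|H]; auto. subst a. apply Hd in H. lia.
    + exists n. split; auto. intros [H|H]; auto.
Qed.

Lemma ctbl_inf_countable (P : W -> Prop) : ctbl_inf W P -> countable P.
Proof. intros [f [_ [_ H]]]. exists f. auto. Qed.

Lemma ctbl_inf_infinite (P : W -> Prop) : ctbl_inf W P -> infinite P.
Proof.
  intros [f [H1 [H2 _]]] l. destruct (inj_seq_avoids_list f H2 l 0) as [n [_ Hn]]. eauto.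
Qed.

Lemma ctbl_infI (P : W -> Prop) : countable P -> infinite P -> ctbl_inf W P.
Proof.
  intros [s Hs] Hinf.
  (* enumerate P greedily: at each stage take the least index of a new element *)
  set (fresh := fun (l : list W) (k : nat) => P (s k) /\ ~ In (s k) l).
  set (idx := fun l => choose_or 0 (fun k => fresh l k /\ forall j, j < k -> ~ fresh l j)).
  assert (Hidx : forall l, fresh l (idx l) /\ forall j, j < idx l -> ~ fresh l j).
  { intro l. apply choose_or_spec, (wf_least Nat.lt lt_wf).
    destruct (Hinf l) as [x [Px Hx]]. destruct (Hs x Px) as [k <-]. now exists k. }
  set (pre := fix pre n := match n with 0 => nil | S n => pre n ++ [s (idx (pre n))] end).
  assert (Hpre_mono : forall n m x, n <= m -> In x (pre n) -> In x (pre m)).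
  { intros n m x Hnm. induction Hnm; auto. intro H. simpl. apply in_or_app; auto. }
  assert (Hpre_new : forall n m, n < m -> In (s (idx (pre n))) (pre m)).
  { intros n m Hnm. apply (Hpre_mono (S n)); [lia|]. apply in_or_app. right. now left. }
  exists (fun n => s (idx (pre n))). split; [|split].
  - intro n. apply (Hidx (pre n)).
  - intros n m E. destruct (Nat.lt_trichotomy n m) as [H|[H|H]]; auto; exfalso.
    + apply (proj2 (proj1 (Hidx (pre m)))). rewrite <- E. auto.
    + apply (proj2 (proj1 (Hidx (pre n)))). rewrite E. auto.
  - intros x Px. destruct (Hs x Px) as [k <-]. apply NNPP; intro Hn.
    assert (Hk : forall n, fresh (pre n) k).
    { intro n. split; auto. induction n; simpl; [auto|].
      intro Hk. apply in_app_or in Hk. destruct Hk as [Hk|[Hk|[]]]; eauto. }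
    (* [k] stays a candidate forever, which bounds the strictly increasing indices *)
    assert (Hle : forall n, idx (pre n) <= k).
    { intro n. apply Nat.nlt_ge. intro H. exact (proj2 (Hidx (pre n)) k H (Hk n)). }
    assert (Hinc : forall n, idx (pre n) < idx (pre (S n))).
    { intro n. destruct (Nat.lt_trichotomy (idx (pre n)) (idx (pre (S n)))) as [H|[E|H]];
        auto; exfalso.
      - apply (proj2 (proj1 (Hidx (pre (S n))))). rewrite <- E. apply Hpre_new. lia.
      - apply (proj2 (Hidx (pre n)) _ H). destruct (proj1 (Hidx (pre (S n)))) as [H1 H2].
        split; auto. intro; apply H2, (Hpre_mono n); auto. }
    assert (Hgrow : forall n, n <= idx (pre n)).
    { induction n; [lia|]. specialize (Hinc n). lia. }
    specialize (Hle (S k)). specialize (Hgrow (S k)). lia.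
Qed.

Lemma ctbl_inf_add (P : W -> Prop) a : ctbl_inf W P -> ctbl_inf W (fun x => P x \/ x = a).
Proof.
  intro H. apply ctbl_infI.
  - apply countable_union; [apply ctbl_inf_countable; auto|apply countable_eq1].
  - intro l. destruct (ctbl_inf_infinite P H l) as [x [Hx1 Hx2]]. eauto.
Qed.

End Countable.

Section Hull.
Variable W : Type.
Variable G : nat -> list W -> W.

Definition closed_under (P : W -> Prop) : Prop :=
  forall i l, Forall P l -> P (G i l).

Definition hull (Y : W -> Prop) (x : W) : Prop :=
  forall P : W -> Prop, (forall y, Y y -> P y) -> closed_under P -> P x.

Lemma hull_seed (Y : W -> Prop) y : Y y -> hull Y y.
Proof. intros Hy P HP _. auto. Qed.

Lemma hull_closed (Y : W -> Prop) : closed_under (hull Y).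
Proof.
  intros i l Hl P HY HP. apply HP.
  induction Hl as [|a l Ha Hl IH]; constructor; auto. apply Ha; auto.
Qed.

Lemma hull_min (Y P : W -> Prop) :
  (forall y, Y y -> P y) -> closed_under P -> forall x, hull Y x -> P x.
Proof. intros H1 H2 x Hx. apply Hx; auto. Qed.

Lemma hull_mono (Y Y' : W -> Prop) :
  (forall y, Y y -> Y' y) -> forall x, hull Y x -> hull Y' x.
Proof.
  intros H. apply hull_min; [intros y Hy; apply hull_seed; auto | apply hull_closed].
Qed.

Lemma hull_directed_union {I : Type} (Yi : I -> W -> Prop) (i0 : I) :
  (forall i j, exists k, (forall x, Yi i x -> Yi k x) /\ (forall x, Yi j x -> Yi k x)) ->
  forall x, hull (fun x => exists i, Yi i x) x -> exists i, hull (Yi i) x.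
Proof.
  intros Hd. apply hull_min.
  - intros y [i Hi]. exists i. apply hull_seed; auto.
  - intros n l Hl.
    assert (Hk : exists k, Forall (hull (Yi k)) l).
    { induction Hl as [|a l [i Ha] Hl [j Hj]].
      - exists i0. constructor.
      - destruct (Hd i j) as [k [Hik Hjk]]. exists k. constructor.
        + apply (hull_mono (Yi i)); auto.
        + eapply Forall_impl; [|exact Hj]. intros b. apply hull_mono; auto. }
    destruct Hk as [k Hk]. exists k. apply hull_closed; auto.
Qed.

Fixpoint lists_upto (n : nat) (L : list W) : list (list W) :=
  match n with
  | 0 => [nil]
  | S n => nil :: flat_map (fun x => map (cons x) (lists_upto n L)) L
  end.

Lemma lists_upto_spec (L : list W) : forall n l, length l <= n ->
  Forall (fun x => In x L) l -> In l (lists_upto n L).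
Proof.
  induction n; intros l Hlen Hl.
  - destruct l; simpl in *; [auto|lia].
  - destruct l as [|a l]; simpl; [auto|]. right.
    inversion Hl; subst. apply in_flat_map. exists a. split; auto.
    apply in_map. apply IHn; auto. simpl in Hlen; lia.
Qed.

(* Stage k+1 adds the k-th seed and every value of G_0 .. G_(k-1) on lists of
   length <= k drawn from stage k; the stages are prefixes of each other. *)
Fixpoint hull_stage (s : nat -> W) (k : nat) : list W :=
  match k with
  | 0 => nil
  | S k => hull_stage s k ++
      (s k :: flat_map (fun i => map (G i) (lists_upto k (hull_stage s k))) (seq 0 k))
  end.

Lemma hull_stage_prefix (s : nat -> W) k m :
  exists t, hull_stage s (k + m) = hull_stage s k ++ t.
Proof.
  induction m as [|m [t Ht]].
  - exists nil. rewrite Nat.add_0_r, app_nil_r. auto.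
  - rewrite Nat.add_succ_r. simpl. rewrite Ht. eexists. rewrite <- app_assoc. reflexivity.
Qed.

Lemma hull_stage_length (s : nat -> W) k : k <= length (hull_stage s k).
Proof. induction k; simpl; auto. rewrite length_app. simpl. lia. Qed.

Lemma hull_stage_mono (s : nat -> W) k k' x :
  k <= k' -> In x (hull_stage s k) -> In x (hull_stage s k').
Proof.
  intros Hk Hx. replace k' with (k + (k' - k)) by lia.
  destruct (hull_stage_prefix s k (k' - k)) as [t ->]. apply in_or_app; auto.
Qed.

Lemma hull_stage_nth (s : nat -> W) k j :
  j < length (hull_stage s k) ->
  nth j (hull_stage s (S j)) (s 0) = nth j (hull_stage s k) (s 0).
Proof.
  intro Hj. destruct (le_lt_dec k (S j)) as [Hkj|Hkj].
  - replace (S j) with (k + (S j - k)) by lia.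
    destruct (hull_stage_prefix s k (S j - k)) as [t ->]. apply app_nth1; auto.
  - pose proof (hull_stage_length s (S j)).
    replace k with (S j + (k - S j)) by lia.
    destruct (hull_stage_prefix s (S j) (k - S j)) as [t ->].
    symmetry. apply app_nth1. lia.
Qed.

Lemma hull_in_stages (s : nat -> W) (Y : W -> Prop) :
  (forall x, Y x -> exists n, s n = x) ->
  forall x, hull Y x -> exists k, In x (hull_stage s k).
Proof.
  intros Hs. apply hull_min.
  - intros y Hy. destruct (Hs y Hy) as [n <-]. exists (S n). simpl.
    apply in_or_app. right. now left.
  - intros i l Hl.
    assert (HK : exists K, Forall (fun x => In x (hull_stage s K)) l).
    { induction Hl as [|a l [k Ha] Hl [K HK]].
      - exists 0. constructor.
      - exists (max k K). constructor.
        + eapply hull_stage_mono; [|exact Ha]. lia.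
        + eapply Forall_impl; [|exact HK]. intros b. apply hull_stage_mono. lia. }
    destruct HK as [K HK].
    set (k := max K (max (S i) (length l))).
    exists (S k). simpl. apply in_or_app. right. right.
    apply in_flat_map. exists i. split; [apply in_seq; lia|].
    apply in_map, lists_upto_spec; [lia|].
    eapply Forall_impl; [|exact HK]. intros b. apply hull_stage_mono. lia.
Qed.

Lemma hull_countable (Y : W -> Prop) : countable W Y -> countable W (hull Y).
Proof.
  intros [s Hs]. exists (fun n => nth n (hull_stage s (S n)) (s 0)).
  intros x Hx. destruct (hull_in_stages s Y Hs x Hx) as [k Hk].
  destruct (In_nth _ _ (s 0) Hk) as [j [Hj Hjx]].
  exists j. rewrite (hull_stage_nth s k j Hj). exact Hjx.
Qed.

End Hull.

Section Omega2.
Variable W : Type.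
Variable lt : W -> W -> Prop.
Hypothesis HO : Omega2Order W lt.

Lemma ord_irrefl x : ~ lt x x.
Proof. apply HO. Qed.

Lemma ord_trans x y z : lt x y -> lt y z -> lt x z.
Proof. apply HO. Qed.

Lemma ord_total x y : lt x y \/ x = y \/ lt y x.
Proof. apply HO. Qed.

Lemma ord_wf : well_founded lt.
Proof. apply HO. Qed.

Lemma segment_inj_om1 x : exists f : W -> W,
  (forall y, lt y x -> om1 W lt (f y)) /\ (forall y z, lt y x -> lt z x -> f y = f z -> y = z).
Proof. apply HO. Qed.

Lemma no_inj_om1 :
  ~ exists f : W -> W, (forall y, om1 W lt (f y)) /\ (forall y z, f y = f z -> y = z).
Proof. apply HO. Qed.

Lemma om1_downward x y : om1 W lt x -> lt y x -> om1 W lt y.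
Proof. intros [f Hf] Hyx. exists f. intros z Hz. apply Hf. eapply ord_trans; eauto. Qed.

Lemma exists_not_om1 : exists z, ~ om1 W lt z.
Proof.
  apply NNPP; intro Hn. apply no_inj_om1. exists (fun y => y). split; auto.
  intro y. apply NNPP. eauto.
Qed.

Lemma exists_om1 : exists z, om1 W lt z.
Proof.
  destruct exists_not_om1 as [w _].
  destruct (wf_least lt ord_wf (fun _ => True)) as [z [_ Hz]]; [now exists w|].
  exists z, (fun _ => z). intros y Hy. exfalso. eapply Hz; eauto.
Qed.

Lemma countable_not_full (P : W -> Prop) : countable W P -> exists y, ~ P y.
Proof.
  intros [s Hs]. apply NNPP; intro Hn. apply no_inj_om1. exists (fun y => y). split; auto.
  intro y. exists s. intros z _. apply Hs. apply NNPP; eauto.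
Qed.

(* The least point outside a countable set [X] plays the role of [X ∩ ω1]. *)
Definition mex (X : W -> Prop) (m : W) : Prop := ~ X m /\ forall v, lt v m -> X v.

Lemma mex_unique X m m' : mex X m -> mex X m' -> m = m'.
Proof.
  intros [H1 H2] [H1' H2'].
  destruct (ord_total m m') as [H|[H|H]]; [exfalso; auto | auto | exfalso; auto].
Qed.

Lemma mex_seteq X Y m : seteq W X Y -> mex Y m -> mex X m.
Proof.
  intros HXY [H1 H2]. split; [rewrite (HXY m); auto | intros v Hv; apply HXY; auto].
Qed.

Lemma mex_exists X : countable W X -> exists m, mex X m /\ om1 W lt m.
Proof.
  intros HX. destruct (wf_least lt ord_wf _ (countable_not_full X HX)) as [m [Hm Hmin]].
  assert (Hbelow : forall v, lt v m -> X v) by (intros v Hv; apply NNPP; eauto).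
  exists m. split; [split; auto|].
  destruct HX as [t Ht]. exists t. auto.
Qed.

Lemma countable_om1_bounded (P : W -> Prop) :
  countable W P -> (forall x, P x -> om1 W lt x) ->
  exists y, om1 W lt y /\ forall x, P x -> lt x y.
Proof.
  intros [s Hs] HP.
  set (Q := fun x => exists n, om1 W lt (s n) /\ (x = s n \/ lt x (s n))).
  assert (HQ : countable W Q).
  { apply countable_bigunion. intro n. destruct (classic (om1 W lt (s n))) as [Ho|Hno].
    - apply countable_sub with (fun x => x = s n \/ lt x (s n)).
      + apply countable_union; [apply countable_eq1 | exact Ho].
      + intros x [_ H]; exact H.
    - apply countable_sub with (fun x => x = s n); [apply countable_eq1|].
      intros x [H _]; contradiction. }
  destruct (mex_exists Q HQ) as [y [[Hy Hbelow] Hyo]].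
  exists y. split; auto.
  intros x Px. destruct (Hs x Px) as [n <-].
  destruct (ord_total (s n) y) as [H|[H|H]]; auto; exfalso; apply Hy; exists n; auto.
Qed.

Lemma increasing_om1_sup (ds : nat -> W) :
  (forall n, om1 W lt (ds n)) -> (forall n, lt (ds n) (ds (S n))) ->
  exists D, om1 W lt D /\ (forall n, lt (ds n) D) /\
    forall v, lt v D -> exists n, lt v (ds n).
Proof.
  intros Hom Hstep.
  destruct (countable_om1_bounded (fun z => exists n, ds n = z)) as [y [Hy Hy']].
  { exists ds. auto. }
  { intros z [n <-]. auto. }
  destruct (wf_least lt ord_wf (fun D => forall n, lt (ds n) D)) as [D [HD HDmin]].
  { exists y. intro n. apply Hy'. eauto. }
  exists D. split; [|split; auto].
  - destruct (ord_total D y) as [H|[->|H]]; [eapply om1_downward; eauto | auto |].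
    exfalso. apply (HDmin y H). intro n. apply Hy'. eauto.
  - intros v Hv. apply NNPP; intro Hn. apply (HDmin v Hv). intro n.
    destruct (ord_total (ds n) v) as [H|[H|H]]; auto; exfalso; apply Hn.
    + exists (S n). rewrite <- H. auto.
    + eauto.
Qed.

Definition seg_with (d xi : W) (x : W) : Prop := lt x d \/ x = xi.

Definition trace_point (G : nat -> list W -> W) (xi d : W) : Prop :=
  om1 W lt d /\ infinite W (fun x => lt x d) /\
  forall z, hull W G (seg_with d xi) z -> om1 W lt z -> lt z d.

Lemma seg_with_directed (Q : W -> Prop) xi (i j : {d | Q d}) :
  exists k : {d | Q d},
    (forall x, seg_with (proj1_sig i) xi x -> seg_with (proj1_sig k) xi x) /\
    (forall x, seg_with (proj1_sig j) xi x -> seg_with (proj1_sig k) xi x).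
Proof.
  destruct i as [i Hi], j as [j Hj]; simpl.
  destruct (ord_total i j) as [H|[<-|H]];
    [exists (exist _ j Hj) | exists (exist _ i Hi) | exists (exist _ i Hi)]; simpl;
    split; intros x [Hx|Hx]; try (right; exact Hx); left; eauto using ord_trans.
Qed.

Lemma hull_seg_with_bounded G xi d : om1 W lt d ->
  exists y, om1 W lt y /\ lt d y /\
    forall z, hull W G (seg_with d xi) z -> om1 W lt z -> lt z y.
Proof.
  intro Hd.
  destruct (countable_om1_bounded
              (fun z => z = d \/ (hull W G (seg_with d xi) z /\ om1 W lt z))) as [y [Hy1 Hy2]].
  - apply countable_union; [apply countable_eq1|].
    apply countable_sub with (hull W G (seg_with d xi)); [|intros x [H _]; exact H].
    apply hull_countable, countable_union; [exact Hd | apply countable_eq1].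
  - intros x [->|[_ H]]; auto.
  - exists y. split; auto.
Qed.

Lemma trace_point_unbounded G xi x : om1 W lt x -> exists d, trace_point G xi d /\ lt x d.
Proof.
  intros Hx.
  set (bound := fun d y => om1 W lt y /\ lt d y /\
                  forall z, hull W G (seg_with d xi) z -> om1 W lt z -> lt z y).
  set (ds := fun n => Nat.iter n (fun d => choose_or d (bound d)) x).
  assert (Hnext : forall d, om1 W lt d -> bound d (choose_or d (bound d))).
  { intros d Hd. apply choose_or_spec, hull_seg_with_bounded, Hd. }
  assert (Hds : forall n, om1 W lt (ds n) /\ bound (ds n) (ds (S n))).
  { induction n as [|n [_ IH]].
    - split; [auto | exact (Hnext x Hx)].
    - split; [apply IH | exact (Hnext _ (proj1 IH))]. }
  assert (Hinc : forall n m, n < m -> lt (ds n) (ds m)).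
  { intros n m Hnm. induction Hnm as [|m _ IH]; [exact (proj1 (proj2 (proj2 (Hds n))))|].
    eapply ord_trans; [exact IH | exact (proj1 (proj2 (proj2 (Hds m))))]. }
  destruct (increasing_om1_sup ds) as [D [HDo [HD Hbelow]]];
    [apply Hds | intro n; apply Hinc; auto |].
  exists D. split; [split; [auto|split] | apply (HD 0)].
  - intro l. destruct (inj_seq_avoids_list W ds) with (l := l) (N := 0) as [n [_ Hn]]; eauto.
    intros n m E. destruct (Nat.lt_trichotomy n m) as [H|[H|H]]; auto; exfalso;
      apply Hinc in H; rewrite E in H; eapply ord_irrefl; eauto.
  - intros z Hz Hzo.
    set (Q := fun d => exists n, ds n = d).
    assert (Hz' : hull W G (fun x => exists k : {d | Q d}, seg_with (proj1_sig k) xi x) z).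
    { revert Hz. apply hull_mono. intros v [Hv| ->].
      - destruct (Hbelow v Hv) as [n Hn]. exists (exist Q (ds n) (ex_intro _ n eq_refl)).
        left; auto.
      - exists (exist Q (ds 0) (ex_intro _ 0 eq_refl)). right; auto. }
    apply (hull_directed_union W G _ (exist Q (ds 0) (ex_intro _ 0 eq_refl))) in Hz';
      [|apply seg_with_directed].
    destruct Hz' as [[d [n <-]] Hn]; simpl in Hn.
    eapply ord_trans; [apply (Hds n); auto | apply HD].
Qed.

Lemma trace_point_closed G xi d : om1 W lt d -> (exists y, lt y d) ->
  (forall y, lt y d -> exists z, trace_point G xi z /\ lt y z /\ lt z d) ->
  trace_point G xi d.
Proof.
  intros Hd [y Hy] Hcof.
  destruct (Hcof y Hy) as [z0 [Hz0 [_ Hz0d]]].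
  split; [exact Hd|split].
  - intro l. destruct Hz0 as [_ [Hinf _]]. destruct (Hinf l) as [x [Hx1 Hx2]].
    exists x. split; eauto using ord_trans.
  - intros z Hz Hzo.
    set (Q := fun i => trace_point G xi i /\ lt i d).
    assert (Hz' : hull W G (fun x => exists k : {i | Q i}, seg_with (proj1_sig k) xi x) z).
    { revert Hz. apply hull_mono. intros v [Hv| ->].
      - destruct (Hcof v Hv) as [w [Hw1 [Hw2 Hw3]]].
        exists (exist Q w (conj Hw1 Hw3)). left; auto.
      - exists (exist Q z0 (conj Hz0 Hz0d)). right; auto. }
    apply (hull_directed_union W G _ (exist Q z0 (conj Hz0 Hz0d))) in Hz';
      [|apply seg_with_directed].
    destruct Hz' as [[i Hi] Hzi]; simpl in Hzi.
    destruct Hi as [[_ [_ Hi]] Hid].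
    eapply ord_trans; [apply Hi|]; auto.
Qed.

Lemma trace_point_club G xi : club1 W lt (trace_point G xi).
Proof.
  split; [intros d [H _]; exact H | split].
  - apply trace_point_unbounded.
  - apply trace_point_closed.
Qed.

Lemma trace_point_hull G xi d : trace_point G xi d ->
  ctbl_inf W (hull W G (seg_with d xi)) /\ mex (hull W G (seg_with d xi)) d.
Proof.
  intros [Hd [Hinf Hb]]. split; [|split].
  - apply ctbl_infI.
    + apply hull_countable, countable_union; [exact Hd | apply countable_eq1].
    + intro l. destruct (Hinf l) as [x [H1 H2]]. exists x. split; auto.
      apply hull_seed. left; auto.
  - intro H. apply (ord_irrefl d). apply Hb; auto.
  - intros v Hv. apply hull_seed. left; auto.
Qed.

Definition club_next (C : W -> Prop) (y : W) : W := choose_or y (fun z => C z /\ lt y z).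

Lemma club_next_in C (U : W -> Prop) y :
  (forall x, C x -> U x) -> U y -> U (club_next C y).
Proof.
  intros HC Hy. unfold club_next.
  destruct (classic (exists z, C z /\ lt y z)) as [Hex|Hn].
  - apply HC, (choose_or_spec y _ Hex).
  - rewrite choose_or_default; auto.
Qed.

Lemma club_contains_trace C X d :
  club1 W lt C -> om1 W lt d -> (exists y, lt y d) -> mex X d ->
  (forall z, X z -> om1 W lt z -> lt z d) -> (forall y, X y -> X (club_next C y)) -> C d.
Proof.
  intros [HCo [Hunb Hcl]] Hd Hne [_ Hbelow] Htrace Hnext.
  apply Hcl; auto. intros y Hy.
  assert (Hyo : om1 W lt y) by (eapply om1_downward; eauto).
  destruct (choose_or_spec y (fun z => C z /\ lt y z) (Hunb y Hyo)) as [HC Hlt].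
  exists (club_next C y). repeat split; auto.
Qed.

Lemma card_om1_not_full Z : card_om1 W lt Z -> exists eta, ~ Z eta.
Proof.
  intros [cf [Hcf1 [Hcf2 _]]]. apply NNPP; intro Hn. apply no_inj_om1.
  assert (HZ : forall y, Z y) by (intro y; apply NNPP; eauto).
  exists cf. split; auto.
Qed.

Section Antichain.
Variable fam : W -> W -> Prop.
Hypothesis fam_stationary : forall xi, stationary1 W lt (fam xi).
Hypothesis fam_disjoint :
  forall xi eta, xi <> eta -> ~ stationary1 W lt (fun x => fam xi x /\ fam eta x).

Definition guessing (X : W -> Prop) : Prop :=
  ctbl_inf W X /\ exists d, mex X d /\
    ((exists xi, X xi /\ ~ om1 W lt xi /\ fam xi d) \/
     (forall xi, ~ om1 W lt xi -> ~ fam xi d)).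

Lemma guessing_stationary : stationary_in W (fun _ => True) guessing.
Proof.
  intros g _. destruct exists_not_om1 as [xi Hxi].
  set (G := fun (_ : nat) (l : list W) => g l).
  destruct (fam_stationary xi _ (trace_point_club G xi)) as [d [Hfd Hd]].
  destruct (trace_point_hull G xi d Hd) as [Hci Hmex].
  exists (hull W G (seg_with d xi)). split.
  - split; [exact Hci | split; [intros x _; exact I|]].
    intros l Hl. exact (hull_closed W G _ 0 l Hl).
  - exists (hull W G (seg_with d xi)). split; [|intro; tauto].
    split; [exact Hci|]. exists d. split; [exact Hmex|].
    left. exists xi. repeat split; auto. apply hull_seed. right; auto.
Qed.

Lemma guessing_proj_stationary : proj_stationary W lt guessing.
Proof.
  split; [apply guessing_stationary|].
  destruct exists_om1 as [z0 Hz0].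
  exists (fun _ => z0). split; [intros l _; exact Hz0|].
  intros B [HB [HBo _]].
  destruct (mex_exists B (ctbl_inf_countable W B HB)) as [d [[HdB Hd] Hdo]].
  destruct (classic (exists xi, ~ om1 W lt xi /\ fam xi d)) as [[xi [Hxi Hfxi]]|Hn].
  - exists (fun x => B x \/ x = xi). split.
    + split; [apply ctbl_inf_add; auto|]. exists d. split.
      * split; [intros [H| ->]; auto | intros v Hv; left; auto].
      * left. exists xi. repeat split; auto.
    + intro x. split.
      * intros [[H| ->] Ho]; [auto | contradiction].
      * intro H. split; [left; auto | apply HBo; auto].
  - exists B. split.
    + split; auto. exists d. split; [split; auto|].
      right. intros xi H1 H2. apply Hn. eauto.
    + intro x. split; [intros [H _]; auto | intro H; split; auto; apply HBo; auto].
Qed.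

Definition separating_club (eta xi : W) : W -> Prop :=
  choose_or (fun _ => False)
    (fun C => club1 W lt C /\ forall x, C x -> fam xi x -> ~ fam eta x).

Lemma separating_club_spec eta xi : xi <> eta ->
  club1 W lt (separating_club eta xi) /\
  forall x, separating_club eta xi x -> fam xi x -> ~ fam eta x.
Proof.
  intros Hne.
  apply (choose_or_spec _ (fun C => club1 W lt C /\ forall x, C x -> fam xi x -> ~ fam eta x)).
  apply NNPP; intro Hn. apply (fam_disjoint xi eta Hne).
  intros C HC. apply NNPP; intro Hn2. apply Hn. exists C. split; auto.
  intros x Hx Hxi Heta. apply Hn2. exists x. auto.
Qed.

Lemma separating_club_om1 eta xi x : separating_club eta xi x -> om1 W lt x.
Proof.
  unfold separating_club.
  destruct (classic (exists C, club1 W lt C /\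
                      forall x, C x -> fam xi x -> ~ fam eta x)) as [Hex|Hn].
  - apply (choose_or_spec _ _ Hex).
  - rewrite choose_or_default; auto. intros [].
Qed.

Definition separating_closure (g : list W -> W) (eta : W) (i : nat) (l : list W) : W :=
  match i, l with
  | S _, [xi; y] => club_next (separating_club eta xi) y
  | _, _ => g l
  end.

Lemma separating_closure_closed (Z : W -> Prop) g eta :
  subset W (om1 W lt) Z -> fun_into W Z g -> closed_under W (separating_closure g eta) Z.
Proof.
  intros HZ Hg [|i] l Hl; [apply Hg; auto|].
  destruct l as [|xi [|y [|z l]]]; try (apply Hg; auto).
  inversion Hl as [|? ? _ Hl']; inversion Hl' as [|? ? Hy _]. subst.
  unfold separating_closure. apply club_next_in; auto. intros x Hx. apply HZ. eapply separating_club_om1; eauto.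
Qed.

Lemma guessing_not_reflecting Z g :
  subset W (om1 W lt) Z -> card_om1 W lt Z -> fun_into W Z g ->
  ~ (forall Y, in_club W Z g Y -> inS W guessing Y).
Proof.
  intros HZ HZcard Hg Hrefl.
  destruct (card_om1_not_full Z HZcard) as [eta Heta].
  assert (Hetao : ~ om1 W lt eta) by (intro; apply Heta, HZ; auto).
  set (G := separating_closure g eta).
  destruct exists_om1 as [z0 Hz0].
  destruct (fam_stationary eta _ (trace_point_club G z0)) as [d [Hfd Hd]].
  destruct (trace_point_hull G z0 d Hd) as [Hci Hmex].
  set (X := hull W G (seg_with d z0)) in *.
  assert (HXZ : subset W X Z).
  { intros x. apply (hull_min W G (seg_with d z0) Z).
    - intros y [Hy| ->]; apply HZ; [exact (om1_downward d y (proj1 Hd) Hy) | exact Hz0].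
    - apply separating_closure_closed; auto. }
  destruct (Hrefl X) as [A [[_ [d' [Hmex' Halt]]] HAX]].
  { split; [exact Hci | split; [exact HXZ|]]. intros l Hl. exact (hull_closed W G _ 0 l Hl). }
  assert (d' = d) as -> by (eapply mex_unique; eauto using mex_seteq).
  destruct Halt as [[xi [HAxi [Hxio Hfxi]]]|Hnone]; [|exact (Hnone eta Hetao Hfd)].
  assert (HXxi : X xi) by (apply HAX; auto).
  destruct (separating_club_spec eta xi) as [Hclub Hsep].
  { intros ->. exact (Heta (HXZ _ HXxi)). }
  apply (Hsep d); auto.
  destruct Hd as [Hdo [Hinf Htrace]].
  apply (club_contains_trace _ X); auto.
  - destruct (Hinf nil) as [y [Hy _]]. eauto.
  - intros y Hy. apply (hull_closed W G _ 1 [xi; y]). repeat constructor; auto.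
Qed.

Lemma SRP_no_antichain : SRP W lt -> False.
Proof.
  intro HSRP. destruct (HSRP guessing) as [Z [HZ1 [HZ2 [g [Hg Hcl]]]]].
  - intros A [H _]; exact H.
  - apply guessing_proj_stationary.
  - exact (guessing_not_reflecting Z g HZ1 HZ2 Hg Hcl).
Qed.

End Antichain.

Lemma covered_family_small (F : (W -> Prop) -> Prop) (e : W -> W -> Prop) xi :
  (forall A, F A -> exists eta, lt eta xi /\ seteq W A (e eta)) ->
  exists f : (W -> Prop) -> W, (forall A, F A -> om1 W lt (f A)) /\
    (forall A B, F A -> F B -> f A = f B -> seteq W A B).
Proof.
  intros Hcov. destruct (segment_inj_om1 xi) as [inj [Hinj1 Hinj2]].
  set (index := fun A => choose_or xi (fun eta => lt eta xi /\ seteq W A (e eta))).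
  assert (Hindex : forall A, F A -> lt (index A) xi /\ seteq W A (e (index A)))
    by (intros A HA; apply choose_or_spec, Hcov, HA).
  exists (fun A => inj (index A)). split.
  - intros A HA. apply Hinj1, (Hindex A HA).
  - intros A B HA HB E. destruct (Hindex A HA) as [Ha1 Ha2], (Hindex B HB) as [Hb1 Hb2].
    assert (E' : index A = index B) by (apply Hinj2; auto).
    intro x. rewrite (Ha2 x), (Hb2 x), E'. tauto.
Qed.

Lemma large_family_enumeration (F : (W -> Prop) -> Prop) :
  ~ (exists f : (W -> Prop) -> W, (forall A, F A -> om1 W lt (f A)) /\
       (forall A B, F A -> F B -> f A = f B -> seteq W A B)) ->
  exists fam : W -> W -> Prop, (forall xi, F (fam xi)) /\
    (forall xi eta, xi <> eta -> ~ seteq W (fam xi) (fam eta)).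
Proof.
  intros Hlarge.
  set (body := fun xi (rec : forall eta, lt eta xi -> W -> Prop) =>
     choose_or (fun _ : W => False)
       (fun A => F A /\ forall eta (p : lt eta xi), ~ seteq W A (rec eta p))).
  set (fam := Fix ord_wf (fun _ => W -> Prop) body).
  assert (Hfix : forall xi, fam xi = body xi (fun eta _ => fam eta)).
  { intro xi. apply (Fix_eq ord_wf (fun _ => W -> Prop) body).
    intros x f1 f2 Hf. unfold body.
    replace f2 with f1; [reflexivity|].
    apply functional_extensionality_dep; intro y.
    apply functional_extensionality_dep; intro p. apply Hf. }
  assert (Hfam : forall xi, F (fam xi) /\ forall eta, lt eta xi -> ~ seteq W (fam xi) (fam eta)).
  { intro xi. rewrite Hfix. apply (choose_or_spec (fun _ : W => False)).
    apply NNPP; intro Hn. apply Hlarge, (covered_family_small F fam xi).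
    intros A HA. apply NNPP; intro Hn2. apply Hn. exists A. split; auto.
    intros eta p Hs. apply Hn2. eauto. }
  exists fam. split; [apply Hfam|].
  intros xi eta Hne Hs. destruct (ord_total xi eta) as [H|[H|H]].
  - apply (proj2 (Hfam eta) xi H). intro x. rewrite (Hs x). tauto.
  - contradiction.
  - exact (proj2 (Hfam xi) eta H Hs).
Qed.

End Omega2.

Theorem mainTheorem20 (W : Type) (lt : W -> W -> Prop) :
  Omega2Order W lt -> SRP W lt -> NS_saturated W lt.
Proof.
  intros HO HSRP F _ Hstat Hdisj. apply NNPP; intro Hlarge.
  destruct (large_family_enumeration W lt HO F Hlarge) as [fam [HF Hdist]].
  apply (SRP_no_antichain W lt HO fam); auto.
Qed.
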